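(* For every $p\in k(x)$ there exists a circuit $c_p\in\mathsf{ACirc}[0,1]$ with $[\![c_p]\!]=\{(\bullet,p)\}$.
   Context: Fix a field $k$; $k(x)$ is the field of fractions of polynomials in $x$ over $k$. Circuits: terms built from generators with sorts $(n,m)$: copier $\Delta:(1,2)$, discard $!:(1,0)$, amplifier $\mathsf{s}_r:(1,1)$ ($r\in k$), register $\mathsf{x}:(1,1)$, adder $+:(2,1)$, zero $0:(0,1)$, one $\mathbf{1}:(0,1)$; mirror images $\Delta^{op}:(2,1)$, $!^{op}:(0,1)$, $\mathsf{s}_r^{op}$, $\mathsf{x}^{op}:(1,1)$, $+^{op}:(1,2)$, $0^{op}:(1,0)$, $\mathbf{1}^{op}:(1,0)$; $\mathrm{id}_0:(0,0),\mathrm{id}_1:(1,1),\mathrm{sw}:(2,2)$; closed under sequential composition $;$ and parallel composition $\oplus$. $\mathsf{ACirc}[n,m]$ is the set of circuits of sort $(n,m)$. Denotation: $[\![\Delta]\!]=\{(p,(p,p))\}$, $[\![!]\!]=\{(p,\bullet)\}$, $[\![+]\!]=\{((p,q),p+q)\}$, $[\![0]\!]=\{(\bullet,0)\}$, $[\![\mathbf 1]\!]=\{(\bullet,1)\}$, $[\![\mathsf s_r]\!]=\{(p,rp)\}$, $[\![\mathsf x]\!]=\{(p,px)\}$ ($p,q\in k(x)$, $\bullet$ the unique element of $k(x)^0$); mirrored generators denote converse relations; $\mathrm{id}_1,\mathrm{sw},\mathrm{id}_0$ denote identity, swap, $\{(\bullet,\bullet)\}$; $;$ is relational composition and $\oplus$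 product of relations. *)

From HB Require Import structures.
From mathcomp Require Import all_boot all_algebra fraction.
Set Implicit Arguments. Unset Strict Implicit. Unset Printing Implicit Defensive.
Import GRing.Theory.
Local Open Scope ring_scope.

Definition ratfun (k : fieldType) := {fraction {poly k}}.
Definition cst (k : fieldType) (r : k) : ratfun k := FracField.tofrac (r%:P).
Definition xvar (k : fieldType) : ratfun k := FracField.tofrac ('X : {poly k}).

Inductive circ (k : fieldType) : nat -> nat -> Type :=
| Copy : circ k 1 2
| Disc : circ k 1 0
| Amp : k -> circ k 1 1
| Reg : circ k 1 1
| Add : circ k 2 1
| Zero : circ k 0 1
| One : circ k 0 1
| CopyOp : circ k 2 1
| DiscOp : circ k 0 1
| AmpOp : k -> circ k 1 1
| RegOp : circ k 1 1
| AddOp : circ k 1 2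
| ZeroOp : circ k 1 0
| OneOp : circ k 1 0
| Id0 : circ k 0 0
| Id1 : circ k 1 1
| Sw : circ k 2 2
| Seq : forall n m l, circ k n m -> circ k m l -> circ k n l
| Par : forall n1 m1 n2 m2, circ k n1 m1 -> circ k n2 m2 -> circ k (n1 + n2) (m1 + m2).

Definition rel_of (k : fieldType) (n m : nat) :=
  n.-tuple (ratfun k) -> m.-tuple (ratfun k) -> Prop.

Fixpoint sem (k : fieldType) (n m : nat) (c : circ k n m) : rel_of k n m :=
  match c in circ _ n m return rel_of k n m with
  | Copy => fun u v => exists p, u = [tuple p] /\ v = [tuple p; p]
  | Disc => fun u v => exists p, u = [tuple p] /\ v = [tuple]
  | Amp r => fun u v => exists p, u = [tuple p] /\ v = [tuple cst r * p]
  | Reg => fun u v => exists p, u = [tuple p] /\ v = [tuple p * xvar k]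
  | Add => fun u v => exists p q, u = [tuple p; q] /\ v = [tuple p + q]
  | Zero => fun u v => u = [tuple] /\ v = [tuple 0]
  | One => fun u v => u = [tuple] /\ v = [tuple 1]
  | CopyOp => fun u v => exists p, u = [tuple p; p] /\ v = [tuple p]
  | DiscOp => fun u v => exists p, u = [tuple] /\ v = [tuple p]
  | AmpOp r => fun u v => exists p, u = [tuple cst r * p] /\ v = [tuple p]
  | RegOp => fun u v => exists p, u = [tuple p * xvar k] /\ v = [tuple p]
  | AddOp => fun u v => exists p q, u = [tuple p + q] /\ v = [tuple p; q]
  | ZeroOp => fun u v => u = [tuple 0] /\ v = [tuple]
  | OneOp => fun u v => u = [tuple 1] /\ v = [tuple]
  | Id0 => fun u v => u = [tuple] /\ v = [tuple]
  | Id1 => fun u v => u = v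
  | Sw => fun u v => exists p q, u = [tuple p; q] /\ v = [tuple q; p]
  | Seq n m l c1 c2 => fun u w => exists v, sem c1 u v /\ sem c2 v w
  | Par n1 m1 n2 m2 c1 c2 => fun u v =>
      exists u1 u2 v1 v2, u = cat_tuple u1 u2 /\ v = cat_tuple v1 v2 /\
                          sem c1 u1 v1 /\ sem c2 u2 v2
  end.

(* Write p = a / b with polynomials a, b.  Multiplication by a polynomial is a
   functional circuit built by Horner's scheme from amplifiers, registers, copiers
   and adders, and feeding 1 into it gives a circuit producing the constant a.  The
   relational semantics then lets us solve b q = a: the mirrored discard emits an
   arbitrary q, one copy of which is multiplied by b and compared with a by the
   mirrored copier, which relates only equal inputs; the other copy is the output.
   Since b <> 0, the only q that passes is p. *)

From mathcomp Require Import all_boot all_algebra fraction generic_quotient ring.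
Import GRing.Theory.
Set Implicit Arguments.
Unset Strict Implicit.
Local Open Scope ring_scope.

Local Notation "x %:F" := (FracField.tofrac x).

Lemma frac_clear_denominator (R : idomainType) (x : {fraction R}) :
  exists a b : R, b != 0 /\ x * b%:F = a%:F.
Proof.
elim/quotW: x => r; exists r.1, r.2; have r2_neq0 := denom_ratioP r; split=> //.
unlock FracField.tofrac; apply: etrans (esym (FracField.pi_mul _ _)) _; apply/eqmodP.
rewrite /= FracField.equivfE /FracField.mulf.
by rewrite !numden_Ratio ?mulf_neq0 ?oner_neq0 // !mulr1 mulrC.
Qed.

Section Tuples.
Context {T : Type}.

Lemma tuple1_inj {a b : T} : [tuple a] = [tuple b] -> a = b.
Proof. by move/(congr1 val) => [->]. Qed.

Lemma tuple2_inj {a b c d : T} : [tuple a; b] = [tuple c; d] -> a = c /\ b = d.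
Proof. by move/(congr1 val) => [-> ->]. Qed.

Lemma tuple1P (t : 1.-tuple T) : exists a, t = [tuple a].
Proof. by case: t / tupleP => a t; exists a; rewrite (tuple0 t); apply: val_inj. Qed.

Lemma tuple2P (t : 2.-tuple T) : exists a b, t = [tuple a; b].
Proof.
case: t / tupleP => a t; case: t / tupleP => b t.
by exists a, b; rewrite (tuple0 t); apply: val_inj.
Qed.

Lemma tuple2_cat (a b : T) : [tuple a; b] = cat_tuple [tuple a] [tuple b].
Proof. exact: val_inj. Qed.

Lemma cat_tuple1_nil (a : T) : cat_tuple [tuple a] [tuple] = [tuple a].
Proof. exact: val_inj. Qed.

Lemma cat_nil_tuple1 (a : T) : cat_tuple [tuple] [tuple a] = [tuple a].
Proof. exact: val_inj. Qed.

Lemma cat_tuple_inj m n (u1 v1 : m.-tuple T) (u2 v2 : n.-tuple T) :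
  cat_tuple u1 u2 = cat_tuple v1 v2 -> u1 = v1 /\ u2 = v2.
Proof.
move/(congr1 val) => /= uv; split; apply: val_inj.
  by move: (congr1 (take m) uv); rewrite !take_size_cat ?size_tuple.
by move: (congr1 (drop m) uv); rewrite !drop_size_cat ?size_tuple.
Qed.

End Tuples.

Section Circuits.
Variable k : fieldType.
Local Notation F := (ratfun k).

Lemma sem_Par n1 m1 n2 m2 (c1 : circ k n1 m1) (c2 : circ k n2 m2) u1 u2 v1 v2 :
  sem (Par c1 c2) (cat_tuple u1 u2) (cat_tuple v1 v2) <-> sem c1 u1 v1 /\ sem c2 u2 v2.
Proof.
split=> [[u1' [u2' [v1' [v2' [/cat_tuple_inj[-> ->] [/cat_tuple_inj[-> ->]]]]]]] //|].
by exists u1, u2, v1, v2.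
Qed.

Definition computes (c : circ k 1 1) (f : F -> F) :=
  forall a v, sem c [tuple a] v <-> v = [tuple f a].

Definition produces (c : circ k 0 1) (p : F) :=
  forall v, sem c [tuple] v <-> v = [tuple p].

Definition accepts (c : circ k 1 0) (A : F -> Prop) :=
  forall a, sem c [tuple a] [tuple] <-> A a.

Lemma computes_Amp r : computes (Amp r) (fun a => cst r * a).
Proof. by move=> a v; split=> [[p [/tuple1_inj -> ->]] | ->] //; exists a. Qed.

Lemma computes_Reg : computes (Reg k) (fun a => a * xvar k).
Proof. by move=> a v; split=> [[p [/tuple1_inj -> ->]] | ->] //; exists a. Qed.

Lemma computes_Seq c1 c2 f1 f2 :
  computes c1 f1 -> computes c2 f2 -> computes (Seq c1 c2) (fun a => f2 (f1 a)).
Proof.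
move=> h1 h2 a v; split=> [[w [/h1 -> /h2 //]]|->].
by exists [tuple f1 a]; split; [apply/h1 | apply/h2].
Qed.

Lemma computes_zero : computes (Seq (Disc k) (Zero k)) (fun=> 0).
Proof.
move=> a v; split=> [[w [_ [_ ->]]] //|->].
by exists [tuple]; split; first exists a.
Qed.

Lemma computes_Par c1 c2 f1 f2 : computes c1 f1 -> computes c2 f2 ->
  forall a b w, sem (Par c1 c2) [tuple a; b] w <-> w = [tuple f1 a; f2 b].
Proof.
move=> h1 h2 a b w; have [b1 [b2 ->]] := tuple2P w.
rewrite !tuple2_cat sem_Par h1 h2.
by split=> [[-> ->] | /cat_tuple_inj[-> ->]].
Qed.

Definition fork_add (c1 c2 : circ k 1 1) : circ k 1 1 :=
  Seq (Copy k) (Seq (Par c1 c2) (Add k)).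

Lemma computes_fork_add c1 c2 f1 f2 : computes c1 f1 -> computes c2 f2 ->
  computes (fork_add c1 c2) (fun a => f1 a + f2 a).
Proof.
move=> h1 h2 a v; split=> [|->].
  move=> [w [[q [/tuple1_inj <- ->]] [w' [/(computes_Par h1 h2) ->]]]].
  by move=> [q1 [q2 [/tuple2_inj[<- <-] ->]]].
exists [tuple a; a]; split; first by exists a.
exists [tuple f1 a; f2 a]; split; first exact/(computes_Par h1 h2).
by exists (f1 a), (f2 a).
Qed.

Fixpoint horner_circ (s : seq k) : circ k 1 1 :=
  if s is c :: s' then fork_add (Amp c) (Seq (horner_circ s') (Reg k))
  else Seq (Disc k) (Zero k).

Lemma computes_horner s : computes (horner_circ s) (fun a => (Poly s)%:F * a).
Proof.
elim: s => [|c s IH] a v; first by rewrite computes_zero tofrac0 mul0r.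
rewrite (computes_fork_add (computes_Amp c) (computes_Seq IH computes_Reg)).
suff -> : (cons_poly c (Poly s))%:F * a = cst c * a + (Poly s)%:F * a * xvar k by [].
by rewrite cons_poly_def tofracD tofracM /cst /xvar; ring.
Qed.

Lemma produces_One : produces (One k) 1.
Proof. by move=> v; split=> [[_ ->] | ->]. Qed.

Lemma produces_Seq c d p f : produces c p -> computes d f -> produces (Seq c d) (f p).
Proof.
move=> hc hd v; split=> [[w [/hc -> /hd //]] | ->].
by exists [tuple p]; split; [apply/hc | apply/hd].
Qed.

Definition const_circ (q : {poly k}) : circ k 0 1 := Seq (One k) (horner_circ q).

Lemma produces_const q : produces (const_circ q) q%:F.
Proof. by have := produces_Seq produces_One (computes_horner q); rewrite polyseqK mulr1. Qed.

Lemma accepts_Seq c t f A : computes c f -> accepts t A -> accepts (Seq c t) (fun a => A (f a)).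
Proof.
move=> hc ht a; split=> [[w [/hc -> /ht //]] | /ht fa].
by exists [tuple f a]; split=> //; apply/hc.
Qed.

Definition eq_test (c : circ k 0 1) : circ k 1 0 :=
  Seq (Par (Id1 k) c) (Seq (CopyOp k) (Disc k)).

Lemma accepts_eq_test c p : produces c p -> accepts (eq_test c) (fun a => a = p).
Proof.
move=> hc a.
have par_spec w : sem (Par (Id1 k) c) [tuple a] w <-> w = [tuple a; p].
  have [b1 [b2 ->]] := tuple2P w.
  (* The input [tuple a] has type (1 + 0).-tuple here, hence the contextual pattern. *)
  rewrite !tuple2_cat -[X in sem _ X _](cat_tuple1_nil a) sem_Par hc.
  by split=> [[<- ->] | /cat_tuple_inj[-> ->]].
split=> [[w [/par_spec -> [w' [[q [/tuple2_inj[-> ->] _]] _]]]] // | a_p]; subst a.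
exists [tuple p; p]; split; first exact/par_spec.
by exists [tuple p]; split; exists p.
Qed.

Definition solve_circ (t : circ k 1 0) : circ k 0 1 :=
  Seq (DiscOp k) (Seq (Copy k) (Par t (Id1 k))).

Lemma produces_solve t p : accepts t (fun a => a = p) -> produces (solve_circ t) p.
Proof.
move=> ht v; have [b ->] := tuple1P v.
have par_spec q : sem (Par t (Id1 k)) [tuple q; q] [tuple b] <-> q = p /\ q = b.
  rewrite tuple2_cat -[X in sem _ _ X](cat_nil_tuple1 b) sem_Par ht.
  by split=> [[-> /tuple1_inj] | [-> ->]].
split=> [|/tuple1_inj b_p]; last first.
  subst b; exists [tuple p]; split; first by exists p.
  by exists [tuple p; p]; split; [exists p | apply/par_spec].
by move=> [w [[q [_ ->]] [w' [[q' [/tuple1_inj <- ->]] /par_spec[-> <-]]]]].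
Qed.

End Circuits.

Theorem lemma1 (k : fieldType) (p : ratfun k) :
  exists c : circ k 0 1,
    forall (u : 0.-tuple (ratfun k)) (v : 1.-tuple (ratfun k)),
      sem c u v <-> (u = [tuple] /\ v = [tuple p]).
Proof.
have [a [b [b_neq0 pb_a]]] := frac_clear_denominator p.
pose t := Seq (horner_circ b) (eq_test (const_circ a)).
have t_accepts_p : accepts t (fun q => q = p).
  move=> q; rewrite (accepts_Seq (computes_horner b) (accepts_eq_test (produces_const a))).
  rewrite polyseqK -pb_a mulrC; split=> [|->] //.
  by apply: mulIf; rewrite tofrac_eq0.
exists (solve_circ t) => u v; rewrite (tuple0 u) (produces_solve t_accepts_p).
by split=> [-> | []].
Qed.
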